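(* For $1\le i\le n-1$ let $\sigma^i\in\mathrm{Map}(S_{g,n}\setminus D)$ be the braid generator acting by $m_i\mapsto m_{i+1}$, $m_{i+1}\mapsto m_{i+1}m_im_{i+1}^{-1}$ and trivially on all other generators, and let $L_{\sigma^i}:V_{\mu_1s_1\dots\mu_ns_n}\to V_{\dots\mu_{i+1}s_{i+1},\mu_is_i\dots}$ be $L_{\sigma^i}\psi=p^i\circ\psi\circ(\tilde\sigma^i_G)^{-1}$. Then for all $\psi\in V_{\mu_1s_1\dots\mu_ns_n}$, $L_{\sigma^i}\psi=p^i\circ\Big(\big(\Pi^{(i)}_{\mu_{i+1}}\otimes\Pi^{(i+1)}_{\mu_i}\big)(R)\,\big(\pi^i_*\psi\big)\Big),$ where $R(v_1,u_1;v_2,u_2)=\delta_e(v_1)\delta_e(u_1v_2^{-1})$ is the universal $R$-matrix of $D(G)$.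
   Context: $G$: finite-dimensional connected simply connected unimodular real Lie group with Haar measure $dz$. $S_{g,n}\setminus D$: oriented genus $g$ surface, $n$ punctures, open disc removed, $\pi_1$ freely generated by $m_1,\dots,m_n$ (punctures) and $a_j,b_j$ (handles). Coordinates on $G^{n+2g}$: $(v_{M_1},\dots,v_{M_n},u_{A_1},\dots,u_{B_g})$. Fix $g_{\mu_1},\dots,g_{\mu_n}\in G$, $N_{\mu_i}$ the centraliser of $g_{\mu_i}$, $\Pi_{s_i}:N_{\mu_i}\to U(V_{s_i})$ irreducible unitary. $V_{\mu_1s_1\dots\mu_ns_n}$ is the Hilbert space (modulo zero-norm states) of square-integrable $\psi:G^{n+2g}\to V_{s_1}\otimes\dots\otimes V_{s_n}$ with $\psi(v_{M_1}h_1,\dots,v_{M_n}h_n,u_{A_1},\dots,u_{B_g})=(\Pi_{s_1}(h_1^{-1})\otimes\dots\otimes\Pi_{s_n}(h_n^{-1}))\psi(v)$ for $h_k\in N_{\mu_k}$; $V_{\dots\mu_{i+1}s_{i+1},\mu_is_i\dots}$ is the analogous space with the labels in slots $i,i+1$ exchanged. $\tilde\sigma^i_G:G^{n+2g}\to G^{n+2g}$ (the lift of $\sigma^i$) maps $v_{M_i}\mapsto v_{M_{i+1}}$, $v_{M_{i+1}}\mapsto v_{M_{i+1}}g_{\mu_{i+1}}v_{M_{i+1}}^{-1}v_{M_i}$, leaving all other coordinates unchanged. $p^i$ exchanges the tensor factors $V_{s_i}$ and $V_{s_{i+1}}$. $\pi^i:G^{n+2g}\to G^{n+2g}$ exchanges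 the coordinates $v_{M_i}$ and $v_{M_{i+1}}$, and $\pi^i_*\psi=\psi\circ(\pi^i)^{-1}=\psi\circ\pi^i$. For $1\le k\le n$, $\mu\in\{\mu_1,\dots,\mu_n\}$ and $F\in D(G)$, $\Pi^{(k)}_\mu(F)$ acts on functions $\varphi$ on $G^{n+2g}$ by $(\Pi^{(k)}_\mu(F)\varphi)(v)=\int_GF(z,v_{M_k}g_\mu v_{M_k}^{-1})\varphi(v_{M_1},\dots,z^{-1}v_{M_k},\dots,u_{B_g})dz$, and for a function $\mathcal R$ on $G^4$, $\big((\Pi^{(i)}_\mu\otimes\Pi^{(i+1)}_{\mu'})(\mathcal R)\varphi\big)(v)=\int_{G\times G}\mathcal R(z_1,v_{M_i}g_\mu v_{M_i}^{-1};z_2,v_{M_{i+1}}g_{\mu'}v_{M_{i+1}}^{-1})\varphi(\dots,z_1^{-1}v_{M_i},z_2^{-1}v_{M_{i+1}},\dots)dz_1dz_2$, with delta functions in $\mathcal R$ evaluated formally. $D(G)=C_0(G\times G,\mathbb C)$ with delta functions adjoined, product $(F_1\bullet F_2)(v,u)=\int_GF_1(z,u)F_2(z^{-1}v,z^{-1}uz)dz$. *)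

From mathcomp Require Import all_boot.
Set Implicit Arguments. Unset Strict Implicit. Unset Printing Implicit Defensive.

(* The Lie,
   topological and Haar-measure structure of G play no role in the
   (pointwise) identity of Theorem 4.4 once delta functions are evaluated
   formally. *)
Record Grp := {
  gcar :> Type;
  gmul : gcar -> gcar -> gcar;
  ginv : gcar -> gcar;
  g1 : gcar;
  gmulA : forall x y z, gmul x (gmul y z) = gmul (gmul x y) z;
  gmul1 : forall x, gmul g1 x = x;
  gmulg1 : forall x, gmul x g1 = x;
  gmulVg : forall x, gmul (ginv x) x = g1;
  gmulgV : forall x, gmul x (ginv x) = g1 }.

Arguments g1 {g}.
Arguments gmul {g}.
Arguments ginv {g}.

Section Defs.
Variable G : Grp.
Local Notation "x * y" := (gmul x y).
Local Notation "x ^-1" := (ginv x).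

Definition conjG (a x : G) : G := x * a * x^-1.

Variable n : nat.

Definition upd2 (v : 'I_n -> G) (i j : 'I_n) (a b : G) : 'I_n -> G :=
  fun k => if k == i then a else if k == j then b else v k.

(* The lift tilde-sigma^i_G on the puncture coordinates (v_{M_1},...,v_{M_n});
   gm k = g_{mu_k}; i,j = the slots i and i+1.  The handle coordinates are
   left unchanged.
   v_{M_i} |-> v_{M_{i+1}},
   v_{M_{i+1}} |-> v_{M_{i+1}} g_{mu_{i+1}} v_{M_{i+1}}^-1 v_{M_i}. *)
Definition sigmaG (gm : 'I_n -> G) (i j : 'I_n) (v : 'I_n -> G) : 'I_n -> G :=
  upd2 v i j (v j) (conjG (gm j) (v j) * v i).

Definition sigmaG_inv (gm : 'I_n -> G) (i j : 'I_n) (v : 'I_n -> G) : 'I_n -> G :=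
  upd2 v i j (conjG ((gm j)^-1) (v i) * v j) (v i).

Lemma conjGM (a b x : G) : conjG a x * conjG b x = conjG (a * b) x.
Proof.
rewrite /conjG -!gmulA; congr (_ * (_ * _)).
by rewrite [x^-1 * (x * _)]gmulA gmulVg gmul1.
Qed.

Lemma conjG1 (x : G) : conjG g1 x = g1.
Proof. by rewrite /conjG gmulg1 gmulgV. Qed.

Lemma conjG_cancel (a x y : G) : conjG (a^-1) x * (conjG a x * y) = y.
Proof. by rewrite gmulA conjGM gmulVg conjG1 gmul1. Qed.

Lemma conjG_cancel' (a x y : G) : conjG a x * (conjG (a^-1) x * y) = y.
Proof. by rewrite gmulA conjGM gmulgV conjG1 gmul1. Qed.

Lemma sigmaGK (gm : 'I_n -> G) (i j : 'I_n) : i != j ->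
  forall v k, sigmaG gm i j (sigmaG_inv gm i j v) k = v k.
Proof.
move=> ij v k; rewrite /sigmaG /sigmaG_inv /upd2.
have ji : (j == i) = false by apply/negbTE; rewrite eq_sym.
rewrite eqxx ji eqxx.
case: (k =P i) => [->|_] //; case: (k =P j) => [->|_] //.
exact: conjG_cancel'.
Qed.

Lemma sigmaG_invK (gm : 'I_n -> G) (i j : 'I_n) : i != j ->
  forall v k, sigmaG_inv gm i j (sigmaG gm i j v) k = v k.
Proof.
move=> ij v k; rewrite /sigmaG /sigmaG_inv /upd2.
have ji : (j == i) = false by apply/negbTE; rewrite eq_sym.
rewrite eqxx ji eqxx.
case: (k =P i) => [->|_]; first exact: conjG_cancel.
by case: (k =P j) => [->|_].
Qed.

(* Generalized functions R on G^4 in the variables (v1,u1;v2,u2), as they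
   enter (Pi^(i)_mu (x) Pi^(i+1)_mu')(R): for fixed (u1,u2), R u1 u2 is the
   integration functional  f |-> \int\int R(z1,u1;z2,u2) f(z1,z2) dz1 dz2.
   (An ordinary function F gives the Haar integral; delta functions are
   evaluated formally.) *)
Definition gkernel2 (X : Type) := G -> G -> (G -> G -> X) -> X.

(* Universal R-matrix R(v1,u1;v2,u2) = delta_e(v1) delta_e(u1 v2^-1):
   \int\int delta_e(z1) delta_e(u1 z2^-1) f(z1,z2) dz1 dz2 = f(e,u1). *)
Definition Rmatrix (X : Type) : gkernel2 X := fun u1 u2 f => f g1 u1.

Definition Pi2 (U X : Type) (R : gkernel2 X) (i j : 'I_n) (gmu gmu' : G)
  (phi : ('I_n -> G) -> U -> X) : ('I_n -> G) -> U -> X :=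
  fun v u => R (conjG gmu (v i)) (conjG gmu' (v j))
    (fun z1 z2 => phi (upd2 v i j (z1^-1 * v i) (z2^-1 * v j)) u).

Definition pistar (U X : Type) (i j : 'I_n) (phi : ('I_n -> G) -> U -> X)
  : ('I_n -> G) -> U -> X :=
  fun v u => phi (upd2 v i j (v j) (v i)) u.

Definition L_sigma (U W W' : Type) (gm : 'I_n -> G) (i j : 'I_n) (p : W -> W')
  (psi : ('I_n -> G) -> U -> W) : ('I_n -> G) -> U -> W' :=
  fun v u => p (psi (sigmaG_inv gm i j v) u).

End Defs.

(* The delta functions in R force z1 = e and z2 = v_i g_{mu_{i+1}} v_i^-1, so
   after the exchange pi^i the right-hand side evaluates psi at the point with
   slot i equal to (v_i g_{mu_{i+1}} v_i^-1)^-1 v_{i+1} and slot i+1 equal to v_i.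
   As the inverse of a conjugate is the conjugate of the inverse, this point is
   (tilde sigma^i_G)^-1 v. *)
From mathcomp Require Import all_boot.
From Stdlib Require Import FunctionalExtensionality.

Section GroupFacts.
Variable G : Grp.

Lemma ginv_unique (a b : G) : gmul a b = g1 -> ginv a = b.
Proof. by move=> ab1; rewrite -[ginv a]gmulg1 -ab1 gmulA gmulVg gmul1. Qed.

Lemma ginv1 : ginv (@g1 G) = g1.
Proof. by apply: ginv_unique; rewrite gmul1. Qed.

Lemma conjGV (a x : G) : ginv (conjG a x) = conjG (ginv a) x.
Proof. by apply: ginv_unique; rewrite conjGM gmulgV conjG1. Qed.

End GroupFacts.

Section Update2.
Variables (G : Grp) (n : nat) (i j : 'I_n).
Hypothesis neq_ij : i != j.

Lemma upd2_i (v : 'I_n -> G) (a b : G) : upd2 v i j a b i = a.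
Proof. by rewrite /upd2 eqxx. Qed.

Lemma upd2_j (v : 'I_n -> G) (a b : G) : upd2 v i j a b j = b.
Proof. by rewrite /upd2 eq_sym (negbTE neq_ij) eqxx. Qed.

Lemma upd2_upd2 (v : 'I_n -> G) (a b c d : G) :
  upd2 (upd2 v i j a b) i j c d = upd2 v i j c d.
Proof.
apply: functional_extensionality => k; rewrite /upd2.
by case: (k == i); case: (k == j).
Qed.

End Update2.

Theorem theorem4p4 (G : Grp) (n g : nat) (gm : 'I_n -> G) (i j : 'I_n)
  (Hij : nat_of_ord j = (nat_of_ord i).+1)
  (W W' : Type) (p : W -> W')
  (psi : ('I_n -> G) -> ('I_(2 * g) -> G) -> W) :
  forall (v : 'I_n -> G) (u : 'I_(2 * g) -> G),
    L_sigma gm i j p psi v u =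
    p (Pi2 (@Rmatrix G W) i j (gm j) (gm i) (pistar i j psi) v u).
Proof.
move=> v u; have neq_ij : i != j by apply/eqP => eq_ij; move: Hij; rewrite eq_ij => /n_Sn.
rewrite /L_sigma /Pi2 /Rmatrix /pistar.
rewrite upd2_i // upd2_j // upd2_upd2 ginv1 gmul1 conjGV.
by rewrite /sigmaG_inv.
Qed.
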